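(* Let $H_1,H_2$ be complex Hilbert spaces. The set $\{A\in\mathcal B(H_1,H_2): A \text{ is minimum attaining and bounded below}\}$ is dense, in the operator norm, in $\{A\in\mathcal B(H_1,H_2): A\text{ is bounded below}\}$.
   Context: Hilbert spaces are complex and infinite dimensional. For $A\in\mathcal B(H_1,H_2)$, $m(A)=\inf\{\|Ax\|:\|x\|=1\}$; $A$ is minimum attaining if there exists $x_0$ with $\|x_0\|=1$ and $\|Ax_0\|=m(A)$; $A$ is bounded below if there is $c>0$ with $\|Ax\|\geq c\|x\|$ for all $x$. *)

From mathcomp Require Import all_boot all_order all_algebra.
From mathcomp Require Import all_classical all_reals.
From mathcomp.real_closed Require Import complex.
Set Implicit Arguments. Unset Strict Implicit. Unset Printing Implicit Defensive.
Import Order.TTheory GRing.Theory Num.Theory.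
Local Open Scope ring_scope.
Local Open Scope classical_set_scope.

Section Hilbert.
Variable R : realType.
Local Notation C := (R[i]).

Section Space.
Variable V : lmodType C.
Variable ip : V -> V -> C.   (* inner product, linear in the first argument *)

Definition hnorm (x : V) : R := Num.sqrt (@complex.Re R (ip x x)).

Definition inner_product_axioms : Prop :=
  [/\ (forall (a : C) (x y z : V), ip (a *: x + y) z = a * ip x z + ip y z),
      (forall x y : V, ip y x = (ip x y)^*),
      (forall x : V, 0 <= ip x x) &
      (forall x : V, ip x x = 0 -> x = 0)].

Definition complete_hnorm : Prop :=
  forall u : nat -> V,
    (forall e : R, 0 < e -> exists N : nat, forall m n : nat,
        (N <= m)%N -> (N <= n)%N -> hnorm (u m - u n) < e) ->
    exists l : V, forall e : R, 0 < e -> exists N : nat, forall n : nat,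
        (N <= n)%N -> hnorm (u n - l) < e.

Definition infinite_dimensional : Prop :=
  forall s : seq V, exists v : V,
    forall c : nat -> C, v <> \sum_(i < size s) c i *: s`_i.

Definition complex_hilbert_space : Prop :=
  [/\ inner_product_axioms, complete_hnorm & infinite_dimensional].
End Space.

Section Operators.
Variables (V1 V2 : lmodType C) (ip1 : V1 -> V1 -> C) (ip2 : V2 -> V2 -> C).

Definition is_linear_op (A : V1 -> V2) : Prop :=
  forall (a : C) (x y : V1), A (a *: x + y) = a *: A x + A y.

Definition bounded_op (A : V1 -> V2) : Prop :=
  is_linear_op A /\
  exists M : R, forall x : V1, hnorm ip2 (A x) <= M * hnorm ip1 x.

Definition opnorm (A : V1 -> V2) : R :=
  sup [set hnorm ip2 (A x) | x in [set x : V1 | hnorm ip1 x = 1]].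

Definition min_modulus (A : V1 -> V2) : R :=
  inf [set hnorm ip2 (A x) | x in [set x : V1 | hnorm ip1 x = 1]].

Definition minimum_attaining (A : V1 -> V2) : Prop :=
  exists x0 : V1, hnorm ip1 x0 = 1 /\ hnorm ip2 (A x0) = min_modulus A.

Definition bounded_below (A : V1 -> V2) : Prop :=
  exists c : R, 0 < c /\ forall x : V1, c * hnorm ip1 x <= hnorm ip2 (A x).
End Operators.
End Hilbert.

(* Let m = m(A) > 0 and pick a unit vector x0 with n0 = ||A x0|| barely above m.
   Because x0 almost minimises ||A x||, the images A y of vectors y orthogonal to x0
   are almost orthogonal to A x0: perturbing x0 in the direction y gives
   |<A y, A x0>|^2 <= (n0^2 - m^2) (||A||^2 + 1) ||y||^2.  With e = A x0 / n0 and t slightly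
   below m, the operator  B x = P_(e^perp) A (x - <x, x0> x0) + t <x, x0> e  therefore
   satisfies ||B x|| >= t ||x|| and ||B x0|| = t: it is bounded below and attains its
   minimum modulus at x0, while (A - B) x = ((n0 - t) <x, x0> + <A (x - <x, x0> x0), e>) e
   is small for unit x. *)

From mathcomp Require Import all_boot all_order all_algebra.
From mathcomp Require Import all_classical all_reals.
From mathcomp.real_closed Require Import complex.
From mathcomp Require Import ring lra.
Import Order.TTheory GRing.Theory Num.Theory.
Local Open Scope classical_set_scope.
Local Open Scope ring_scope.
Set Implicit Arguments. Unset Strict Implicit. Unset Printing Implicit Defensive.

Local Notation "x %:C" := (real_complex _ x) : ring_scope.
Local Notation Re := complex.Re.
Local Notation Im := complex.Im.

Section ComplexModulus.
Variable R : realType.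

Definition normc2 (z : R[i]) : R := Re z ^+ 2 + Im z ^+ 2.

Lemma normc2_ge0 (z : R[i]) : 0 <= normc2 z.
Proof. by rewrite addr_ge0 ?sqr_ge0. Qed.

Lemma normc2M (z w : R[i]) : normc2 (z * w) = normc2 z * normc2 w.
Proof. by case: z w => a b [c d]; rewrite /normc2 /=; ring. Qed.

Lemma normc2_real (r : R) : normc2 r%:C = r ^+ 2.
Proof. by rewrite /normc2 /=; ring. Qed.

Lemma normc2_conj (z : R[i]) : normc2 z^* = normc2 z.
Proof. by case: z => a b; rewrite /normc2 /=; ring. Qed.

Lemma mulcJ_normc2 (z : R[i]) : z * z^* = (normc2 z)%:C.
Proof.
case: z => a b; apply/eqP; rewrite /normc2 eq_complex /=.
by apply/andP; split; apply/eqP; ring.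
Qed.

Lemma normc2D_le (z w : R[i]) : normc2 (z + w) <= 2 * normc2 z + 2 * normc2 w.
Proof.
case: z w => a b [c d]; rewrite /normc2 /= -subr_ge0.
have -> : 2 * (a ^+ 2 + b ^+ 2) + 2 * (c ^+ 2 + d ^+ 2) - ((a + c) ^+ 2 + (b + d) ^+ 2)
  = (a - c) ^+ 2 + (b - d) ^+ 2 by ring.
by rewrite addr_ge0 ?sqr_ge0.
Qed.

Lemma normc20 : normc2 (0 : R[i]) = 0.
Proof. by rewrite /normc2 /= expr0n addr0. Qed.

Lemma normc2N (z : R[i]) : normc2 (- z) = normc2 z.
Proof. by case: z => a b; rewrite /normc2 /= !sqrrN. Qed.

Lemma Re_conj (z : R[i]) : Re z^* = Re z.
Proof. by case: z. Qed.

End ComplexModulus.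

Section LinearOperators.
Variables (R : realType) (U V W : lmodType R[i]).

Section Laws.
Variable A : U -> V.
Hypothesis linA : is_linear_op A.

Lemma linear_op0 : A 0 = 0.
Proof.
have := linA 1 0 0; rewrite !scale1r addr0 => /esym/eqP.
by rewrite -subr_eq0 addrK => /eqP.
Qed.

Lemma linear_opD x y : A (x + y) = A x + A y.
Proof. by have := linA 1 x y; rewrite !scale1r. Qed.

Lemma linear_opZ a x : A (a *: x) = a *: A x.
Proof. by have := linA a x 0; rewrite !addr0 linear_op0 addr0. Qed.

Lemma linear_opB x y : A (x - y) = A x - A y.
Proof. by rewrite linear_opD -scaleN1r linear_opZ scaleN1r. Qed.

End Laws.

Lemma is_linear_op_comp (f : U -> V) (g : V -> W) :
  is_linear_op f -> is_linear_op g -> is_linear_op (g \o f).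
Proof. by move=> lf lg a x y /=; rewrite lf lg. Qed.

Lemma is_linear_op_add (f g : U -> V) :
  is_linear_op f -> is_linear_op g -> is_linear_op (fun x => f x + g x).
Proof. by move=> lf lg a x y; rewrite lf lg scalerDr addrACA. Qed.

End LinearOperators.

Definition hnorm2 (R : realType) (V : lmodType R[i]) (ip : V -> V -> R[i]) (x : V) : R :=
  Re (ip x x).

Definition proj_perp (R : realType) (V : lmodType R[i]) (ip : V -> V -> R[i]) (e x : V) : V :=
  x - ip x e *: e.

Definition normalize (R : realType) (V : lmodType R[i]) (ip : V -> V -> R[i]) (v : V) : V :=
  (hnorm ip v)^-1%:C *: v.

Section InnerProduct.
Variables (R : realType) (V : lmodType R[i]) (ip : V -> V -> R[i]).
Hypothesis ip_ax : inner_product_axioms ip.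
Implicit Types (a : R[i]) (x y z e : V).

Lemma ip_linear_l z : is_linear_op (ip^~ z).
Proof. by move=> a x y; case: ip_ax => ->. Qed.

Lemma ip_conj x y : ip y x = (ip x y)^*.
Proof. by case: ip_ax. Qed.

Lemma ip0l z : ip 0 z = 0.
Proof. exact: linear_op0 (ip_linear_l z). Qed.

Lemma ipDl x y z : ip (x + y) z = ip x z + ip y z.
Proof. exact: (linear_opD (ip_linear_l z) x y). Qed.

Lemma ipZl a x z : ip (a *: x) z = a * ip x z.
Proof. exact: (linear_opZ (ip_linear_l z) a x). Qed.

Lemma ipBl x y z : ip (x - y) z = ip x z - ip y z.
Proof. exact: (linear_opB (ip_linear_l z) x y). Qed.

Lemma ipDr x y z : ip z (x + y) = ip z x + ip z y.
Proof. by rewrite ip_conj ipDl rmorphD /= -!ip_conj. Qed.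

Lemma ipZr a x z : ip z (a *: x) = a^* * ip z x.
Proof. by rewrite ip_conj ipZl rmorphM /= -ip_conj. Qed.

Lemma ip_self_real x : ip x x = (hnorm2 ip x)%:C.
Proof.
case: ip_ax => _ _ /(_ x) + _; rewrite /hnorm2 lecE /=.
by case: (ip x x) => a b /= /andP[/eqP-> _].
Qed.

Lemma hnorm2_ge0 x : 0 <= hnorm2 ip x.
Proof. by case: ip_ax => _ _ /(_ x); rewrite lecE => /andP[]. Qed.

Lemma hnorm2_eq0 x : hnorm2 ip x = 0 -> x = 0.
Proof. by move=> x0; case: ip_ax => _ _ _; apply; rewrite ip_self_real x0. Qed.

Lemma hnorm2D x y : hnorm2 ip (x + y) = hnorm2 ip x + hnorm2 ip y + 2 * Re (ip x y).
Proof. by rewrite /hnorm2 ipDl !ipDr [ip y x]ip_conj !raddfD /= Re_conj; ring. Qed.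

Lemma hnorm2Z a x : hnorm2 ip (a *: x) = normc2 a * hnorm2 ip x.
Proof. by rewrite /hnorm2 ipZl ipZr mulrA mulcJ_normc2 ip_self_real -rmorphM. Qed.

Lemma hnorm2_add_orth x e a : ip x e = 0 ->
  hnorm2 ip (x + a *: e) = hnorm2 ip x + normc2 a * hnorm2 ip e.
Proof. by move=> xe; rewrite hnorm2D hnorm2Z ipZr xe mulr0 /= mulr0 addr0. Qed.

Lemma hnorm_sqr x : hnorm ip x ^+ 2 = hnorm2 ip x.
Proof. by rewrite sqr_sqrtr ?hnorm2_ge0. Qed.

Lemma hnorm_ge0 x : 0 <= hnorm ip x.
Proof. exact: sqrtr_ge0. Qed.

Lemma hnormZr (r : R) x : hnorm ip (r%:C *: x) = `|r| * hnorm ip x.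
Proof. by rewrite /hnorm -/(hnorm2 ip _) hnorm2Z normc2_real sqrtrM ?sqr_ge0 // sqrtr_sqr. Qed.

Lemma hnorm_gt0 x : (0 < hnorm ip x) = (x != 0).
Proof.
rewrite sqrtr_gt0 lt_def hnorm2_ge0 andbT.
apply/idP/idP => [|/eqP x0]; last by apply/eqP => /hnorm2_eq0.
by apply: contra_neq => ->; rewrite /hnorm2 ip0l.
Qed.

Lemma hnorm0 : hnorm ip 0 = 0.
Proof. by apply/eqP; rewrite eq_le hnorm_ge0 andbT leNgt hnorm_gt0 eqxx. Qed.

Lemma hnorm_normalize v : 0 < hnorm ip v -> hnorm ip (normalize ip v) = 1.
Proof.
by move=> v_gt0; rewrite hnormZr ger0_norm ?invr_ge0 ?(ltW v_gt0) // mulVf ?lt0r_neq0.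
Qed.

Lemma normalizeK v : 0 < hnorm ip v -> (hnorm ip v)%:C *: normalize ip v = v.
Proof.
move=> v_gt0; rewrite scalerA -rmorphM mulfV ?lt0r_neq0 //.
by rewrite (rmorph1 (real_complex R)) scale1r.
Qed.

Lemma exists_unit_vector : infinite_dimensional V -> exists u : V, hnorm ip u = 1.
Proof.
case/(_ [::]) => v v_neq0; exists (normalize ip v); apply: hnorm_normalize.
by rewrite hnorm_gt0; apply/eqP => v0; apply: (v_neq0 (fun=> 0)); rewrite v0 big_ord0.
Qed.

Section UnitVector.
Variable e : V.
Hypothesis e_unit : hnorm2 ip e = 1.

Lemma ip_unit_self : ip e e = 1.
Proof. by rewrite ip_self_real e_unit. Qed.

Lemma proj_perp_orth x : ip (proj_perp ip e x) e = 0.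
Proof. by rewrite ipBl ipZl ip_unit_self mulr1 subrr. Qed.

Lemma hnorm2_proj_perp x :
  hnorm2 ip x = hnorm2 ip (proj_perp ip e x) + normc2 (ip x e).
Proof. by rewrite -{1}[x](subrK (ip x e *: e)) hnorm2_add_orth ?proj_perp_orth // e_unit mulr1. Qed.

End UnitVector.

Lemma linear_proj_perp e : is_linear_op (proj_perp ip e).
Proof.
move=> a x y; rewrite /proj_perp (ip_linear_l e) scalerDl -scalerA scalerBr.
by rewrite opprD addrACA.
Qed.

Lemma linear_rank_one (W : lmodType R[i]) (u : V) (w : W) (c : R[i]) :
  is_linear_op (fun x => (ip x u * c) *: w).
Proof. by move=> a x y; rewrite (ip_linear_l u) mulrDl scalerDl scalerA mulrA. Qed.

End InnerProduct.

Section NearMinimizer.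
Variables (R : realType) (V1 V2 : lmodType R[i]).
Variables (ip1 : V1 -> V1 -> R[i]) (ip2 : V2 -> V2 -> R[i]).
Hypotheses (ax1 : inner_product_axioms ip1) (ax2 : inner_product_axioms ip2).
Variable A : V1 -> V2.
Hypothesis linA : is_linear_op A.
Variables (x0 : V1) (K m : R).
Hypothesis x0_unit : hnorm2 ip1 x0 = 1.
Hypothesis A_le : forall x, hnorm2 ip2 (A x) <= K * hnorm2 ip1 x.
Hypothesis A_ge : forall x, m ^+ 2 * hnorm2 ip1 x <= hnorm2 ip2 (A x).

Lemma near_minimizer_orth y : ip1 y x0 = 0 ->
  normc2 (ip2 (A y) (A x0)) <= (hnorm2 ip2 (A x0) - m ^+ 2) * (K + 1) * hnorm2 ip1 y.
Proof.
move=> y_perp; set c := ip2 (A y) (A x0); set N := hnorm2 ip1 y.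
set gap := hnorm2 ip2 (A x0) - m ^+ 2.
have K_ge0 : 0 <= K.
  by have := A_le x0; rewrite x0_unit mulr1; apply: le_trans; apply: hnorm2_ge0.
have [N0|N_neq0] := eqVneq N 0.
  by rewrite /c (hnorm2_eq0 ax1 N0) (linear_op0 linA) ip0l // normc20 N0 mulr0.
have N_gt0 : 0 < N by rewrite lt_def N_neq0 hnorm2_ge0.
(* Minimality of [m] along the line [x0 + s y] bounds the cross term [c]. *)
have key r : 2 * r * normc2 c <= gap + r ^+ 2 * normc2 c * (K * N).
  pose s := - (r%:C * c^*).
  have ns : normc2 s = r ^+ 2 * normc2 c by rewrite normc2N normc2M normc2_real normc2_conj.
  have sc : Re (s * c) = - (r * normc2 c).
    by rewrite mulNr -mulrA [_^* * c]mulrC mulcJ_normc2 -rmorphM.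
  have := A_ge (s *: y + x0); rewrite (linear_opD linA) (linear_opZ linA) !hnorm2D // !hnorm2Z //.
  rewrite !ipZl // y_perp mulr0 /= mulr0 addr0 -/c sc x0_unit ns -/N.
  have := ler_wpM2l (mulr_ge0 (sqr_ge0 r) (normc2_ge0 c)) (A_le y).
  have := mulr_ge0 (mulr_ge0 (sqr_ge0 m) (mulr_ge0 (sqr_ge0 r) (normc2_ge0 c))) (ltW N_gt0).
  rewrite /gap -/N; nra.
pose W := (K + 1) * N.
have W_gt0 : 0 < W by rewrite mulr_gt0 // ltr_wpDl.
have r_gt0 : 0 < W^-1 by rewrite invr_gt0.
have rKN : W^-1 * (K * N) <= 1.
  rewrite -(mulVf (lt0r_neq0 W_gt0)) ler_wpM2l ?(ltW r_gt0) // /W.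
  by rewrite mulrDl mul1r lerDl ltW.
have rC_le : W^-1 * normc2 c <= gap.
  have := ler_wpM2l (mulr_ge0 (ltW r_gt0) (normc2_ge0 c)) rKN.
  have := key W^-1; nra.
have -> : normc2 c = W^-1 * normc2 c * W by rewrite mulrAC mulVf ?mul1r ?lt0r_neq0.
rewrite -[gap * _ * N]mulrA -/W.
by apply: ler_wpM2r; first exact: ltW.
Qed.

End NearMinimizer.

Section Operators.
Variables (R : realType) (V1 V2 : lmodType R[i]).
Variables (ip1 : V1 -> V1 -> R[i]) (ip2 : V2 -> V2 -> R[i]).
Hypotheses (ax1 : inner_product_axioms ip1) (ax2 : inner_product_axioms ip2).

Lemma hnorm_le_mulP (c : R) (v : V2) (x : V1) : 0 <= c ->
  (hnorm ip2 v <= c * hnorm ip1 x) = (hnorm2 ip2 v <= c ^+ 2 * hnorm2 ip1 x).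
Proof.
move=> c_ge0; rewrite -[c * _]/(c * Num.sqrt (hnorm2 ip1 x)).
rewrite -[c in c * _]ger0_norm // -sqrtr_sqr -sqrtrM ?sqr_ge0 //.
by rewrite ler_sqrt // mulr_ge0 ?sqr_ge0 ?hnorm2_ge0.
Qed.

Lemma mul_le_hnormP (c : R) (v : V2) (x : V1) : 0 <= c ->
  (c * hnorm ip1 x <= hnorm ip2 v) = (c ^+ 2 * hnorm2 ip1 x <= hnorm2 ip2 v).
Proof.
move=> c_ge0; rewrite -[c * _]/(c * Num.sqrt (hnorm2 ip1 x)).
rewrite -[c in c * _]ger0_norm // -sqrtr_sqr -sqrtrM ?sqr_ge0 //.
by rewrite ler_sqrt // hnorm2_ge0.
Qed.

Lemma hnorm2_le_of_hnorm_le (c : R) (v : V2) (x : V1) :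
  hnorm ip2 v <= c * hnorm ip1 x -> hnorm2 ip2 v <= c ^+ 2 * hnorm2 ip1 x.
Proof.
move=> le_vx; have vx_ge0 := le_trans (hnorm_ge0 ip2 v) le_vx.
by rewrite -!hnorm_sqr // -exprMn ler_sqr ?nnegrE ?hnorm_ge0.
Qed.

Lemma opnorm_le (D : V1 -> V2) (c : R) (u : V1) : hnorm ip1 u = 1 ->
  (forall x, hnorm ip1 x = 1 -> hnorm ip2 (D x) <= c) -> opnorm ip1 ip2 D <= c.
Proof.
move=> u_unit D_le; apply: ge_sup; first by exists (hnorm ip2 (D u)), u.
by move=> _ [x /D_le + <-].
Qed.

Lemma minimum_attaining_at (B : V1 -> V2) (x0 : V1) : hnorm ip1 x0 = 1 ->
  (forall x, hnorm ip2 (B x0) * hnorm ip1 x <= hnorm ip2 (B x)) ->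
  minimum_attaining ip1 ip2 B.
Proof.
move=> x0_unit B_ge; exists x0; split=> //.
set S := [set hnorm ip2 (B x) | x in [set x : V1 | hnorm ip1 x = 1]].
have S_x0 : S (hnorm ip2 (B x0)) by exists x0.
have lb : lbound S (hnorm ip2 (B x0)).
  by move=> _ [x /= x_unit <-]; have := B_ge x; rewrite x_unit mulr1.
by apply/le_anti; rewrite ge_inf ?lb_le_inf //; exists (hnorm ip2 (B x0)).
Qed.

Section MinimumModulus.
Variable A : V1 -> V2.
Hypothesis linA : is_linear_op A.
Hypothesis A_bb : bounded_below ip1 ip2 A.
Variable u : V1.
Hypothesis u_unit : hnorm ip1 u = 1.
Local Notation m := (min_modulus ip1 ip2 A).
Let S := [set hnorm ip2 (A x) | x in [set x : V1 | hnorm ip1 x = 1]].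

Let S_neq0 : S !=set0.
Proof. by exists (hnorm ip2 (A u)), u. Qed.

Let S_lb : has_lbound S.
Proof. by exists 0 => _ [x _ <-]; apply: hnorm_ge0. Qed.

Lemma min_modulus_gt0 : 0 < m.
Proof.
case: A_bb => c [c_gt0 A_ge]; apply: lt_le_trans c_gt0 _.
by apply: lb_le_inf => // _ [x /= x_unit <-]; have := A_ge x; rewrite x_unit mulr1.
Qed.

Lemma min_modulus_le x : hnorm ip1 x = 1 -> m <= hnorm ip2 (A x).
Proof. by move=> x_unit; apply: ge_inf => //; exists x. Qed.

Lemma min_modulus_approx eta : 0 < eta ->
  exists2 x0, hnorm ip1 x0 = 1 & hnorm ip2 (A x0) < m + eta.
Proof.
move=> eta_gt0; have : inf S < m + eta by rewrite ltrDl.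
by case/(inf_lt S_neq0) => _ [x0 x0_unit <-]; exists x0.
Qed.

Lemma min_modulus_lower_bound x : m * hnorm ip1 x <= hnorm ip2 (A x).
Proof.
have [->|x_neq0] := eqVneq x 0; first by rewrite (linear_op0 linA) !hnorm0 // mulr0.
have x_gt0 : 0 < hnorm ip1 x by rewrite hnorm_gt0.
have := min_modulus_le (hnorm_normalize ax1 x_gt0).
rewrite (linear_opZ linA) hnormZr // ger0_norm ?invr_ge0 ?(ltW x_gt0) //.
by rewrite ler_pdivlMl // mulrC.
Qed.

End MinimumModulus.
End Operators.

Definition perturb_op (R : realType) (V1 V2 : lmodType R[i])
    (ip1 : V1 -> V1 -> R[i]) (ip2 : V2 -> V2 -> R[i]) (A : V1 -> V2) (x0 : V1) (t : R)
    (x : V1) : V2 :=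
  proj_perp ip2 (normalize ip2 (A x0)) (A (proj_perp ip1 x0 x))
  + (ip1 x x0 * t%:C) *: normalize ip2 (A x0).

Section Perturbation.
Variables (R : realType) (V1 V2 : lmodType R[i]).
Variables (ip1 : V1 -> V1 -> R[i]) (ip2 : V2 -> V2 -> R[i]).
Hypotheses (ax1 : inner_product_axioms ip1) (ax2 : inner_product_axioms ip2).
Variable A : V1 -> V2.
Hypothesis linA : is_linear_op A.
Variables (x0 : V1) (K m t : R).
Hypothesis x0_unit : hnorm ip1 x0 = 1.
Hypothesis A_le : forall x, hnorm2 ip2 (A x) <= K * hnorm2 ip1 x.
Hypothesis A_ge : forall x, m ^+ 2 * hnorm2 ip1 x <= hnorm2 ip2 (A x).
Let n0 := hnorm ip2 (A x0).
Hypothesis n0_gt0 : 0 < n0.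
Let e := normalize ip2 (A x0).
Let B := perturb_op ip1 ip2 A x0 t.
Let gap := (n0 ^+ 2 - m ^+ 2) * (K + 1).

Let x0_unit2 : hnorm2 ip1 x0 = 1.
Proof. by rewrite -hnorm_sqr // x0_unit expr1n. Qed.

Let e_unit : hnorm2 ip2 e = 1.
Proof. by rewrite -hnorm_sqr // hnorm_normalize // expr1n. Qed.

Let K_ge0 : 0 <= K.
Proof. by have := A_le x0; rewrite x0_unit2 mulr1; apply: le_trans; apply: hnorm2_ge0. Qed.

Let gap_ge0 : 0 <= gap.
Proof.
rewrite mulr_ge0 ?subr_ge0 ?addr_ge0 //.
by have := A_ge x0; rewrite x0_unit2 mulr1 -hnorm_sqr.
Qed.

Lemma normc2_ip_normalize y : ip1 y x0 = 0 ->
  normc2 (ip2 (A y) e) * n0 ^+ 2 <= gap * hnorm2 ip1 y.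
Proof.
move=> y_perp; have := near_minimizer_orth ax1 ax2 linA x0_unit2 A_le A_ge y_perp.
rewrite /e /normalize ipZr // normc2M normc2_conj normc2_real -hnorm_sqr // -/n0.
by move=> ?; rewrite mulrAC -exprMn mulVf ?lt0r_neq0 // expr1n mul1r.
Qed.

Lemma hnorm2_perturb_op x : hnorm2 ip2 (B x) =
  hnorm2 ip2 (A (proj_perp ip1 x0 x)) - normc2 (ip2 (A (proj_perp ip1 x0 x)) e)
  + t ^+ 2 * normc2 (ip1 x x0).
Proof.
rewrite /B /perturb_op -/e hnorm2_add_orth ?proj_perp_orth // e_unit mulr1.
by rewrite (hnorm2_proj_perp ax2 e_unit (A _)) normc2M normc2_real addrK mulrC.
Qed.

Lemma perturb_op_x0 : B x0 = t%:C *: e.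
Proof.
rewrite /B /perturb_op -/e /proj_perp ip_self_real // x0_unit2 (rmorph1 (real_complex R)).
by rewrite scale1r subrr (linear_op0 linA) ip0l // scale0r subrr add0r mul1r.
Qed.

Lemma sub_perturb_op x : A x - B x =
  (ip1 x x0 * (n0 - t)%:C + ip2 (A (proj_perp ip1 x0 x)) e) *: e.
Proof.
rewrite /B /perturb_op -/e /proj_perp; set y := x - _; set a := ip1 x x0.
have -> : A x = A y + (a * n0%:C) *: e.
  by rewrite (linear_opB linA) (linear_opZ linA) -(normalizeK n0_gt0) scalerA subrK.
rewrite -[A y - _ + _]addrA [A y + _]addrC addrKA opprD opprK addrCA addrC.
by rewrite rmorphB /= mulrBr scalerDl scalerBl.
Qed.

Lemma linear_perturb_op : is_linear_op B.
Proof.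
apply: is_linear_op_add; last exact: linear_rank_one.
apply: (is_linear_op_comp (f := A \o proj_perp ip1 x0)); last exact: linear_proj_perp.
exact: is_linear_op_comp (linear_proj_perp ax1 x0) linA.
Qed.

Lemma perturb_op_le x : hnorm2 ip2 (B x) <= (K + t ^+ 2) * hnorm2 ip1 x.
Proof.
set y := proj_perp ip1 x0 x.
rewrite hnorm2_perturb_op (hnorm2_proj_perp ax1 x0_unit2 x) -/y.
have := mulr_ge0 K_ge0 (normc2_ge0 (ip1 x x0)).
have := mulr_ge0 (sqr_ge0 t) (hnorm2_ge0 ax1 y).
have := A_le y; have := normc2_ge0 (ip2 (A y) e).
lra.
Qed.

Hypothesis gap_le : gap <= (m ^+ 2 - t ^+ 2) * n0 ^+ 2.

Lemma perturb_op_ge x : t ^+ 2 * hnorm2 ip1 x <= hnorm2 ip2 (B x).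
Proof.
set y := proj_perp ip1 x0 x.
have n02_gt0 : 0 < n0 ^+ 2 by rewrite exprn_gt0.
have g_le : normc2 (ip2 (A y) e) <= (m ^+ 2 - t ^+ 2) * hnorm2 ip1 y.
  rewrite -(ler_pM2r n02_gt0).
  apply: le_trans (normc2_ip_normalize (proj_perp_orth ax1 x0_unit2 x)) _.
  by rewrite [X in _ <= X]mulrAC; apply: ler_wpM2r; rewrite ?hnorm2_ge0.
rewrite hnorm2_perturb_op (hnorm2_proj_perp ax1 x0_unit2 x) -/y.
have := A_ge y; lra.
Qed.

Lemma sub_perturb_op_le x : hnorm2 ip1 x = 1 ->
  hnorm2 ip2 (A x - B x) <= 2 * (n0 - t) ^+ 2 + 2 * (gap / n0 ^+ 2).
Proof.
move=> x_unit; set y := proj_perp ip1 x0 x.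
have n02_gt0 : 0 < n0 ^+ 2 by rewrite exprn_gt0.
have [a_le y_le] : normc2 (ip1 x x0) <= 1 /\ hnorm2 ip1 y <= 1.
  have := hnorm2_proj_perp ax1 x0_unit2 x; rewrite x_unit -/y.
  have := hnorm2_ge0 ax1 y; have := normc2_ge0 (ip1 x x0); lra.
have g_le : normc2 (ip2 (A y) e) <= gap / n0 ^+ 2.
  rewrite ler_pdivlMr // (le_trans (normc2_ip_normalize (proj_perp_orth ax1 x0_unit2 x))) //.
  by rewrite ler_piMr ?gap_ge0.
rewrite sub_perturb_op hnorm2Z // e_unit mulr1 -/y.
apply: le_trans (normc2D_le _ _) _; rewrite normc2M normc2_real.
have := normc2_ge0 (ip1 x x0); have := sqr_ge0 (n0 - t); nra.
Qed.

Lemma perturb_op_bounded : bounded_op ip1 ip2 B.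
Proof.
split; first exact: linear_perturb_op.
exists (Num.sqrt (K + t ^+ 2)) => x.
rewrite hnorm_le_mulP ?sqrtr_ge0 // sqr_sqrtr ?addr_ge0 ?sqr_ge0 //.
exact: perturb_op_le.
Qed.

Lemma perturb_op_bounded_below : 0 < t -> bounded_below ip1 ip2 B.
Proof.
move=> t_gt0; exists t; split=> // x.
by rewrite mul_le_hnormP ?(ltW t_gt0) // perturb_op_ge.
Qed.

Lemma perturb_op_minimum_attaining : 0 <= t -> minimum_attaining ip1 ip2 B.
Proof.
move=> t_ge0; apply: (minimum_attaining_at x0_unit) => x.
rewrite perturb_op_x0 hnormZr // hnorm_normalize // mulr1 ger0_norm //.
by rewrite mul_le_hnormP // perturb_op_ge.
Qed.

Lemma opnorm_sub_perturb_op_le (c : R) : 0 <= c ->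
  2 * (n0 - t) ^+ 2 + 2 * (gap / n0 ^+ 2) <= c ^+ 2 ->
  opnorm ip1 ip2 (fun x => A x - B x) <= c.
Proof.
move=> c_ge0 le_c; apply: (opnorm_le x0_unit) => x x_unit.
have := hnorm_le_mulP ip2 ax1 (A x - B x) x c_ge0; rewrite x_unit mulr1 => ->.
rewrite -(hnorm_sqr ax1 x) x_unit expr1n mulr1.
by apply: le_trans le_c; apply: sub_perturb_op_le; rewrite -(hnorm_sqr ax1 x) x_unit expr1n.
Qed.

End Perturbation.

Lemma perturbation_parameters (R : realType) (m eps K : R) :
  0 < m -> 0 < eps -> 0 <= K ->
  exists t eta : R, [/\ 0 < t, 0 < eta & forall n0, m <= n0 -> n0 < m + eta ->
    (n0 ^+ 2 - m ^+ 2) * (K + 1) <= (m ^+ 2 - t ^+ 2) * n0 ^+ 2 /\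
    2 * (n0 - t) ^+ 2 + 2 * ((n0 ^+ 2 - m ^+ 2) * (K + 1) / n0 ^+ 2) <= (eps / 2) ^+ 2].
Proof.
move=> m_gt0 eps_gt0 K_ge0; set K1 := K + 1.
have K1_gt0 : 0 < K1 by rewrite ltr_wpDl.
pose tau := Num.min (m / 2) (eps / 8).
have tau_gt0 : 0 < tau by rewrite lt_min !divr_gt0.
have [tau_m tau_eps] : tau <= m / 2 /\ tau <= eps / 8.
  by rewrite /tau !ge_min !lexx orbT.
pose eta := Num.min (Num.min m (eps / 8))
                    (Num.min (tau * m ^+ 2 / (3 * K1)) (m * eps ^+ 2 / (48 * K1))).
have eta_gt0 : 0 < eta by rewrite !lt_min m_gt0 !divr_gt0 ?mulr_gt0 ?exprn_gt0.
have [eta_m eta_eps] : eta <= m /\ eta <= eps / 8.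
  by rewrite /eta !ge_min !lexx !orbT.
have eta_tau : 3 * K1 * eta <= tau * m ^+ 2.
  by rewrite mulrC -ler_pdivlMr ?mulr_gt0 // /eta !ge_min lexx !orbT.
have eta_eps2 : 48 * K1 * eta <= m * eps ^+ 2.
  by rewrite mulrC -ler_pdivlMr ?mulr_gt0 // /eta !ge_min lexx !orbT.
exists (m - tau), eta; split=> [|//|n0 m_le n0_lt]; first lra.
have n0_gt0 : 0 < n0 by apply: lt_le_trans m_le.
have gap_le : (n0 ^+ 2 - m ^+ 2) * K1 <= m * (3 * K1 * eta).
  have : (n0 - m) * (n0 + m) <= eta * (3 * m) by apply: ler_pM; lra.
  have := ltW K1_gt0; nra.
have m2_le : m ^+ 2 <= n0 ^+ 2 by rewrite ler_sqr ?nnegrE ?(ltW m_gt0) ?(ltW n0_gt0).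
split.
- apply: (le_trans gap_le); apply: le_trans (ler_wpM2l (ltW m_gt0) eta_tau) _.
  have : tau * m <= m ^+ 2 - (m - tau) ^+ 2 by nra.
  have := mulr_ge0 (ltW tau_gt0) (ltW m_gt0); nra.
- have gap_eps : (n0 ^+ 2 - m ^+ 2) * K1 / n0 ^+ 2 <= eps ^+ 2 / 16.
    rewrite ler_pdivrMr ?exprn_gt0 //; apply: (le_trans gap_le).
    have := ler_wpM2l (ltW m_gt0) eta_eps2; have := ler_wpM2r (sqr_ge0 eps) m2_le; nra.
  have : (n0 - (m - tau)) ^+ 2 <= (eps / 4) ^+ 2 by rewrite ler_sqr ?nnegrE; lra.
  lra.
Qed.

Theorem corollary3p9 (R : realType)
  (H1 H2 : lmodType R[i]) (ip1 : H1 -> H1 -> R[i]) (ip2 : H2 -> H2 -> R[i])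
  (hH1 : complex_hilbert_space ip1) (hH2 : complex_hilbert_space ip2) :
  forall A : H1 -> H2, bounded_op ip1 ip2 A -> bounded_below ip1 ip2 A ->
  forall eps : R, 0 < eps ->
  exists B : H1 -> H2,
    [/\ bounded_op ip1 ip2 B, minimum_attaining ip1 ip2 B,
        bounded_below ip1 ip2 B &
        opnorm ip1 ip2 (fun x => A x - B x) < eps].
Proof.
case: hH1 => ax1 _ /(exists_unit_vector ax1) [u u_unit]; case: hH2 => ax2 _ _.
move=> A [linA [M A_le]] A_bb eps eps_gt0.
set m := min_modulus ip1 ip2 A.
have m_gt0 : 0 < m := min_modulus_gt0 A_bb u_unit.
have A_ge x : m ^+ 2 * hnorm2 ip1 x <= hnorm2 ip2 (A x).
  by rewrite -(mul_le_hnormP ip1 ax2) ?(ltW m_gt0) ?min_modulus_lower_bound.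
have A_le2 x : hnorm2 ip2 (A x) <= M ^+ 2 * hnorm2 ip1 x.
  exact: hnorm2_le_of_hnorm_le ax1 ax2 _ _ _ (A_le x).
have [t [eta [t_gt0 eta_gt0 tuned]]] :=
  perturbation_parameters m_gt0 eps_gt0 (sqr_ge0 M).
have [x0 x0_unit Ax0_lt] := min_modulus_approx ip2 A u_unit eta_gt0.
have m_le := min_modulus_le ip2 A x0_unit.
have [gap_le close] := tuned _ m_le Ax0_lt.
have n0_gt0 : 0 < hnorm ip2 (A x0) by apply: lt_le_trans m_le.
exists (perturb_op ip1 ip2 A x0 t); split.
- exact: (perturb_op_bounded ax1 ax2 linA t x0_unit A_le2 n0_gt0).
- exact: (perturb_op_minimum_attaining ax1 ax2 linA x0_unit A_le2 A_ge n0_gt0 gap_le (ltW t_gt0)).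
- exact: (perturb_op_bounded_below ax1 ax2 linA x0_unit A_le2 A_ge n0_gt0 gap_le t_gt0).
- have half_ge0 : 0 <= eps / 2 by rewrite divr_ge0 ?ltW.
  have := opnorm_sub_perturb_op_le ax1 ax2 linA x0_unit A_le2 A_ge n0_gt0 half_ge0 close.
  move/le_lt_trans; apply.
  by rewrite ltr_pdivrMr // ltr_pMr // ltr1n.
Qed.
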